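(* Let $T$ be a tree. Then $T$ has a complete $\alpha$-labeling if and only if there is a bipartition of $T$ and an arrangement of the vertices of $T$ such that the corresponding biadjacency matrix of $T$ is completely graceful.
   Context: For a graph $G=(V,E)$ with $m$ edges, an $\alpha$-labeling with critical number $k$ is an injective $f:V\to\{0,\ldots,m\}$ whose edge labels $|f(u)-f(v)|$ ($uv\in E$) are distinct and such that every edge $uv$ satisfies $f(u)\le k<f(v)$ or $f(v)\le k<f(u)$; it is complete if $f$ is bijective. For a bipartite graph with ordered parts $X,Y$, the biadjacency matrix is the $|X|\times|Y|$ $0$-$1$ matrix whose $(x,y)$ entry is $1$ iff $xy$ is an edge. For a $p\times q$ matrix the box-value of position $(i,j)$ is $p+j-i$; for $c=1,\ldots,p+q-1$ the positions of box-value $c$ form a diagonal. A $0$-$1$ matrix is completely graceful if every diagonal contains exactly one $1$. *)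

From mathcomp Require Import all_boot all_algebra.
Set Implicit Arguments. Unset Strict Implicit. Unset Printing Implicit Defensive.

Definition simple_graph (V : finType) (e : rel V) : Prop :=
  symmetric e /\ irreflexive e.

(* Acyclic: no simple cycle x, p_1, ..., p_k with k >= 2 (length >= 3). *)
Definition acyclic (V : finType) (e : rel V) : Prop :=
  forall (x : V) (p : seq V),
    uniq (x :: p) -> 2 <= size p -> path e x p -> ~~ e (last x p) x.

Definition is_tree (V : finType) (e : rel V) : Prop :=
  [/\ simple_graph e, 0 < #|V|, (forall x y : V, connect e x y) & acyclic e].

Definition edges (V : finType) (e : rel V) : {set {set V}} :=
  [set [set x; y] | x in V, y in V & e x y].

Definition nedges (V : finType) (e : rel V) : nat := #|edges e|.

Definition ndist (a b : nat) : nat := (a - b) + (b - a).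

Definition alpha_labeling (V : finType) (e : rel V) (f : V -> nat) (k : nat)
  : Prop :=
  [/\ injective f,
      (forall v, f v <= nedges e),
      (forall u v u' v', e u v -> e u' v' ->
          ndist (f u) (f v) = ndist (f u') (f v') -> [set u; v] = [set u'; v'])
    & (forall u v, e u v -> ((f u <= k) && (k < f v)) || ((f v <= k) && (k < f u)))].

Definition complete_labeling (V : finType) (e : rel V) (f : V -> nat) : Prop :=
  forall i, i <= nedges e -> exists v, f v = i.

Definition has_complete_alpha_labeling (V : finType) (e : rel V) : Prop :=
  exists (f : V -> nat) (k : nat), alpha_labeling e f k /\ complete_labeling e f.

(* An ordered bipartition (X, Y) of the graph together with arrangements
   rx : 'I_p -> V of X and ry : 'I_q -> V of Y. *)
Definition bipartition_arrangement (V : finType) (e : rel V) (p q : nat)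
  (rx : 'I_p -> V) (ry : 'I_q -> V) : Prop :=
  [/\ injective rx, injective ry,
      (forall i j, rx i <> ry j),
      (forall v, (exists i, rx i = v) \/ (exists j, ry j = v))
    & (forall i i', ~~ e (rx i) (rx i')) /\ (forall j j', ~~ e (ry j) (ry j'))].

Definition biadjacency (V : finType) (e : rel V) (p q : nat)
  (rx : 'I_p -> V) (ry : 'I_q -> V) : 'M[nat]_(p, q) :=
  \matrix_(i < p, j < q) (e (rx i) (ry j) : nat).

(* box-value of position (i,j) (1-based) is p + j - i; with 0-based
   indices the value is the same. *)
Definition box_value (p q : nat) (i : 'I_p) (j : 'I_q) : nat := p + j - i.

Definition completely_graceful (p q : nat) (A : 'M[nat]_(p, q)) : Prop :=
  (forall i j, (A i j == 0) || (A i j == 1)) /\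
  (forall c, 1 <= c <= p + q - 1 ->
     #|[set ij : 'I_p * 'I_q | (box_value ij.1 ij.2 == c) && (A ij.1 ij.2 == 1)]| = 1).

From mathcomp Require Import all_boot all_algebra.
From mathcomp Require Import zify.
Set Implicit Arguments. Unset Strict Implicit. Unset Printing Implicit Defensive.

(* Give the row vertex [rx i] the label [i] and the column vertex [ry j] the
   label [p + j].  The edge [rx i -- ry j] then gets the label [p + j - i],
   which is exactly the box-value of the position [(i, j)] of the biadjacency
   matrix.  So the edge labels are distinct and exhaust [1..m] precisely when
   every diagonal [c = 1, ..., p + q - 1] of the matrix carries exactly one 1;
   conversely a complete alpha-labeling with critical number [k] arranges the
   vertices labelled [<= k] as rows and the others as columns, in label order. *)

Lemma card_ord_gt0 n : #|[set c : 'I_n.+1 | 0 < c]| = n.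
Proof.
have -> : [set c : 'I_n.+1 | 0 < c] = [set~ ord0].
  by apply/setP=> c; rewrite !inE lt0n -(inj_eq val_inj).
by rewrite cardsC1 card_ord.
Qed.

Section Fibers.

Variables (T : finType) (S : {set T}) (g : T -> nat) (n : nat).
Hypothesis g_range : {in S, forall x, 0 < g x <= n}.

Local Notation fiber c := [set x in S | g x == c].
Local Notation fibers1 := (forall c, 0 < c <= n -> #|fiber c| = 1).

(* [g] read as a map into ['I_n.+1], so that its image can be counted. *)
Let h x : 'I_n.+1 := inord (g x).

Let hE : {in S, forall x, h x = g x :> nat}.
Proof. by move=> x /g_range /andP[_ ?]; rewrite /h inordK. Qed.

Let fiber_h (c : 'I_n.+1) : fiber c = [set x in S | h x == c].
Proof.
by apply/setP=> x; rewrite !inE; case xS: (x \in S); rewrite //= -hE.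
Qed.

Lemma injective_of_fibers1 : fibers1 -> {in S &, injective g}.
Proof.
move=> fib1 x y xS yS gxy.
have /eqP/cards1P[z fibE] := fib1 _ (g_range xS).
have : x \in fiber (g x) by rewrite inE xS eqxx.
have : y \in fiber (g x) by rewrite inE yS -gxy eqxx.
by rewrite fibE !inE => /eqP-> /eqP->.
Qed.

Lemma card_of_fibers1 : fibers1 -> #|S| = n.
Proof.
move=> fib1; rewrite -sum1_card (partition_big h (fun c => 0 < c)) /=; last first.
  by move=> x xS; rewrite hE //; case/andP: (g_range xS).
rewrite -[RHS]card_ord_gt0 -sum1dep_card; apply: eq_bigr => c c0.
by rewrite sum1dep_card -(fib1 c) -?fiber_h // c0 -ltnS ltn_ord.
Qed.

Lemma fibers1_of_injective : {in S &, injective g} -> #|S| = n -> fibers1.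
Proof.
move=> g_inj cardS c /andP[c0 cn].
have h_inj : {in S &, injective h}.
  by move=> x y xS yS /(congr1 (@nat_of_ord _)); rewrite !hE //; apply: g_inj.
have imS : h @: S = [set c : 'I_n.+1 | 0 < c].
  apply/eqP; rewrite eqEcard card_ord_gt0 card_in_imset // cardS leqnn andbT.
  by apply/subsetP=> _ /imsetP[x xS ->]; rewrite inE hE //; case/andP: (g_range xS).
have : inord c \in h @: S by rewrite imS inE inordK.
case/imsetP=> x xS /(congr1 (@nat_of_ord _)); rewrite hE // inordK // => gx.
apply/eqP/cards1P; exists x; apply/setP=> y; rewrite !inE.
apply/andP/eqP=> [[yS /eqP gy]|->]; last by rewrite xS gx.
by apply: g_inj; rewrite ?gy.
Qed.

End Fibers.

Section Arrangement.

Variables (V : finType) (e : rel V) (p q : nat) (rx : 'I_p -> V) (ry : 'I_q -> V).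
Hypothesis e_sym : symmetric e.
Hypothesis arr : bipartition_arrangement e rx ry.

Definition edge_positions : {set 'I_p * 'I_q} := [set ij | e (rx ij.1) (ry ij.2)].

Definition box_position (ij : 'I_p * 'I_q) : nat := box_value ij.1 ij.2.

Lemma box_position_range ij : 0 < box_position ij <= p + q - 1.
Proof.
case: ij => i j; rewrite /box_position /box_value /=.
by have := ltn_ord i; have := ltn_ord j; lia.
Qed.

Lemma edge_arrangement u v : e u v ->
  exists i j, e (rx i) (ry j) /\ ((u, v) = (rx i, ry j) \/ (u, v) = (ry j, rx i)).
Proof.
have [_ _ _ cover [noX noY]] := arr.
move=> euv; case: (cover u) => [[i ui]|[j uj]]; case: (cover v) => [[i' vi]|[j' vj]]; subst.
- by move: (noX i i'); rewrite euv.
- by exists i, j'; split; [|left].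
- by exists i', j; split; [rewrite e_sym|right].
- by move: (noY j j'); rewrite euv.
Qed.

Lemma arrangement_edge_inj i j i' j' :
  [set rx i; ry j] = [set rx i'; ry j'] -> (i, j) = (i', j').
Proof.
have [rx_inj ry_inj rx_ry _ _] := arr; move=> E.
have : rx i \in [set rx i'; ry j'] by rewrite -E set21.
rewrite !inE => /orP[/eqP/rx_inj-> | /eqP/rx_ry //].
have : ry j \in [set rx i'; ry j'] by rewrite -E set22.
by rewrite !inE => /orP[/eqP/esym/rx_ry // | /eqP/ry_inj->].
Qed.

Lemma nedges_arrangement : nedges e = #|edge_positions|.
Proof.
rewrite /nedges.
have -> : edges e = [set [set rx ij.1; ry ij.2] | ij in edge_positions].
  apply/setP=> s; apply/imset2P/imsetP => [[u v _]|[[i j]]].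
    rewrite inE => /andP[_ /edge_arrangement[i [j [eij uv]]]] ->.
    exists (i, j); rewrite ?inE //.
    by case: uv => -[-> ->] //; rewrite setUC.
  by rewrite inE => eij ->; exists (rx i) (ry j); rewrite ?inE.
by rewrite card_in_imset // => -[i j] [i' j'] _ _ /arrangement_edge_inj.
Qed.

Lemma completely_graceful_biadjacency :
  completely_graceful (biadjacency e rx ry) <->
  {in edge_positions &, injective box_position} /\ #|edge_positions| = p + q - 1.
Proof.
have fiberE c : [set ij | (box_value ij.1 ij.2 == c) && (biadjacency e rx ry ij.1 ij.2 == 1)]
    = [set ij in edge_positions | box_position ij == c].
  by apply/setP=> ij; rewrite !inE mxE andbC; case: (e _ _).
have range : {in edge_positions, forall ij, 0 < box_position ij <= p + q - 1}.
  by move=> ij _; apply: box_position_range.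
split=> [[_ cg]|[inj card]].
  have fib1 c : 0 < c <= p + q - 1 -> #|[set ij in edge_positions | box_position ij == c]| = 1.
    by move=> ?; rewrite -fiberE cg.
  by split; [apply: injective_of_fibers1 range _ | apply: card_of_fibers1 range _].
split=> [i j|c c_range]; first by rewrite mxE; case: (e _ _).
by rewrite fiberE (fibers1_of_injective range inj card).
Qed.

Section ArrangedLabeling.

Variable f : V -> nat.
Hypotheses (f_rx : forall i, f (rx i) = i) (f_ry : forall j, f (ry j) = p + j).

Lemma ndist_arranged i j : ndist (f (rx i)) (f (ry j)) = box_value i j.
Proof. by rewrite f_rx f_ry /ndist /box_value; have := ltn_ord i; lia. Qed.

Lemma arranged_edge_label u v : e u v ->
  exists2 ij, ij \in edge_positions &
    [set u; v] = [set rx ij.1; ry ij.2] /\ ndist (f u) (f v) = box_position ij.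
Proof.
move=> /edge_arrangement[i [j [eij uv]]]; exists (i, j); rewrite ?inE //.
case: uv => -[-> ->]; first by rewrite ndist_arranged.
by rewrite setUC /ndist addnC -/(ndist _ _) ndist_arranged.
Qed.

Lemma arranged_distinct_differences :
  (forall u v u' v', e u v -> e u' v' ->
     ndist (f u) (f v) = ndist (f u') (f v') -> [set u; v] = [set u'; v'])
  <-> {in edge_positions &, injective box_position}.
Proof.
split=> [distinct [i j] [i' j'] | inj u v u' v'].
  rewrite !inE /= => eij ei'j' same; apply: arrangement_edge_inj.
  by apply: distinct => //; rewrite !ndist_arranged.
move=> /arranged_edge_label[ij ij_edge [-> duv]].
move=> /arranged_edge_label[ij' ij'_edge [-> du'v']] same.
by rewrite (inj ij ij') // -duv -du'v'.
Qed.

Lemma arranged_injective : injective f.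
Proof.
have [_ _ _ cover _] := arr; move=> u v.
case: (cover u) => [[i <-]|[j <-]]; case: (cover v) => [[i' <-]|[j' <-]];
  rewrite ?f_rx ?f_ry => fuv.
- by rewrite (val_inj fuv).
- by have := ltn_ord i; lia.
- by have := ltn_ord i'; lia.
- by congr ry; apply: val_inj => /=; lia.
Qed.

Lemma arranged_critical u v : e u v ->
  ((f u <= p.-1) && (p.-1 < f v)) || ((f v <= p.-1) && (p.-1 < f u)).
Proof.
by move=> /edge_arrangement[i [j [_ [[-> ->]|[-> ->]]]]]; rewrite f_rx f_ry;
  have := ltn_ord i; lia.
Qed.

Lemma arranged_label_le v : f v <= p + q - 1.
Proof.
have [_ _ _ cover _] := arr.
by case: (cover v) => [[i <-]|[j <-]]; rewrite ?f_rx ?f_ry;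
  [have := ltn_ord i | have := ltn_ord j]; lia.
Qed.

Lemma arranged_label_onto n : 0 < p + q -> n <= p + q - 1 -> exists v, f v = n.
Proof.
move=> pq n_le; case: (ltnP n p) => [n_lt | p_le]; first by exists (rx (Ordinal n_lt)).
have n_lt : n - p < q by lia.
by exists (ry (Ordinal n_lt)); rewrite f_ry /=; lia.
Qed.

Lemma arranged_complete_alpha_labeling :
  {in edge_positions &, injective box_position} -> nedges e = p + q - 1 -> 0 < p + q ->
  alpha_labeling e f p.-1 /\ complete_labeling e f.
Proof.
move=> inj ne pq; split; first split.
- exact: arranged_injective.
- by move=> v; rewrite ne arranged_label_le.
- exact/arranged_distinct_differences.
- exact: arranged_critical.
- by move=> n; rewrite ne; apply: arranged_label_onto.
Qed.

End ArrangedLabeling.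

Lemma arranged_label_exists :
  exists f : V -> nat, (forall i, f (rx i) = i) /\ (forall j, f (ry j) = p + j).
Proof.
have [rx_inj ry_inj rx_ry _ _] := arr.
exists (fun v => if [pick i | rx i == v] is Some i then val i
         else if [pick j | ry j == v] is Some j then p + j else 0).
split=> [i | j].
  by case: pickP => [i' /eqP/rx_inj-> // | /(_ i)]; rewrite eqxx.
case: pickP => [i /eqP/rx_ry // | _].
by case: pickP => [j' /eqP/ry_inj-> // | /(_ j)]; rewrite eqxx.
Qed.

Lemma complete_alpha_labeling_of_graceful :
  0 < #|V| -> completely_graceful (biadjacency e rx ry) -> has_complete_alpha_labeling e.
Proof.
move=> /card_gt0P[v _] /completely_graceful_biadjacency[inj card].
have [f [f_rx f_ry]] := arranged_label_exists.
have pq : 0 < p + q.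
  have [_ _ _ cover _] := arr.
  by case: (cover v) => [[i _]|[j _]]; [have := ltn_ord i | have := ltn_ord j]; lia.
exists f, p.-1; apply: arranged_complete_alpha_labeling => //.
by rewrite nedges_arrangement.
Qed.

End Arrangement.

Lemma complete_labeling_section (V : finType) (e : rel V) (f : V -> nat) :
  complete_labeling e f -> exists g : nat -> V, forall n, n <= nedges e -> f (g n) = n.
Proof.
move=> onto; have [v0 _] := onto 0 (leq0n _).
exists (fun n => odflt v0 [pick v | f v == n]) => n /onto[v fv].
by case: pickP => [w /eqP // | /(_ v)]; rewrite fv eqxx.
Qed.

(* The vertices labelled at most [k] form the first class; an alpha-labeling
   may have [k >= m], which is why the cut is taken at [minn k m]. *)
Lemma arrangement_of_complete_alpha_labeling (V : finType) (e : rel V) (f : V -> nat) k :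
  alpha_labeling e f k -> complete_labeling e f ->
  exists p q (rx : 'I_p -> V) (ry : 'I_q -> V),
    [/\ bipartition_arrangement e rx ry, forall i, f (rx i) = i,
        forall j, f (ry j) = p + j & p + q = (nedges e).+1].
Proof.
move=> [f_inj f_le _ f_crit] /complete_labeling_section[g fg].
set m := nedges e in f_le fg *; set p := (minn k m).+1; set q := m - minn k m.
pose rx (i : 'I_p) := g i; pose ry (j : 'I_q) := g (p + j).
have f_rx i : f (rx i) = i by apply: fg; have := ltn_ord i; lia.
have f_ry j : f (ry j) = p + j by apply: fg; have := ltn_ord j; lia.
exists p, q, rx, ry; split=> //; last by lia.
split.
- by move=> i i' /(congr1 f); rewrite !f_rx => /val_inj.
- by move=> j j' /(congr1 f); rewrite !f_ry => fjj'; apply: val_inj => /=; lia.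
- by move=> i j /(congr1 f); rewrite f_rx f_ry; have := ltn_ord i; lia.
- move=> v; have := f_le v; case: (ltnP (f v) p) => [lt_p | le_p] le_m.
    by left; exists (Ordinal lt_p); apply: f_inj; rewrite f_rx.
  have lt_q : f v - p < q by lia.
  by right; exists (Ordinal lt_q); apply: f_inj; rewrite f_ry /=; lia.
- split=> [i i' | j j']; apply/negP => /f_crit.
    by rewrite !f_rx; have := ltn_ord i; have := ltn_ord i'; lia.
  by rewrite !f_ry; have := ltn_ord j; have := ltn_ord j'; lia.
Qed.

Theorem corollary2p7 (V : finType) (e : rel V) :
  is_tree e ->
  (has_complete_alpha_labeling e <->
   exists (p q : nat) (rx : 'I_p -> V) (ry : 'I_q -> V),
     bipartition_arrangement e rx ry /\ completely_graceful (biadjacency e rx ry)).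
Proof.
move=> [[e_sym _] V_gt0 _ _]; split=> [[f [k [alpha onto]]] | [p [q [rx [ry [arr cg]]]]]].
  have [p [q [rx [ry [arr f_rx f_ry pq]]]]] := arrangement_of_complete_alpha_labeling alpha onto.
  exists p, q, rx, ry; split=> //; apply/completely_graceful_biadjacency.
  split; last by rewrite -(nedges_arrangement e_sym arr); lia.
  by apply/(arranged_distinct_differences e_sym arr f_rx f_ry); case: alpha.
exact: complete_alpha_labeling_of_graceful e_sym arr V_gt0 cg.
Qed.
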